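(* Let $s$ be a Sturmian word and $t\in\{a,b\}^{\omega}$ with $R(t)=s$, where $R$ is the morphism $R(a)=a$, $R(b)=ba$. Suppose that either (1) the first letter of $t$ is $b$, or (2) $s$ admits a factorization $s=U_1U_2\cdots U_n\cdots$ where each $U_i$ is a non-empty prefix of $s$ ending in the letter $a$ and $r_s(U_i)=r_s(U_j)$ for all $i,j\ge1$. Then $t$ is a Sturmian word.
   Context: A Sturmian word is an infinite word $s\in\{a,b\}^{\omega}$ that is aperiodic (not ultimately periodic) and balanced: for all factors $u,v$ of $s$ with $|u|=|v|$ one has $||u|_x-|v|_x|\le 1$ for $x\in\{a,b\}$, where $|u|_x$ is the number of occurrences of $x$ in $u$. A non-empty factor $w$ of $s$ is rich in the letter $z\in\{a,b\}$ if there is a factor $v$ of $s$ with $|v|=|w|$ and $|w|_z>|v|_z$; every non-empty factor of a Sturmian word is rich in exactly one letter, and $r_s(w)\in\{a,b\}$ denotes that letter. *)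

From Stdlib Require Import List Arith Lia.
Import ListNotations.

Inductive letter := La | Lb.

Definition letter_eqb (x y : letter) : bool :=
  match x, y with La, La | Lb, Lb => true | _, _ => false end.

Definition word := nat -> letter.

Definition cnt (z : letter) (w : list letter) : nat :=
  length (filter (fun x => letter_eqb x z) w).

Definition fac (s : word) (i n : nat) : list letter :=
  map (fun k => s (i + k)) (seq 0 n).

Definition is_factor (s : word) (w : list letter) : Prop :=
  exists i, w = fac s i (length w).

Definition is_prefix (s : word) (w : list letter) : Prop :=
  w = fac s 0 (length w).

Definition ult_periodic (s : word) : Prop :=
  exists p N, 0 < p /\ forall n, N <= n -> s (n + p) = s n.

Definition balanced (s : word) : Prop :=
  forall u v, is_factor s u -> is_factor s v -> length u = length v ->
    forall x, cnt x u <= cnt x v + 1 /\ cnt x v <= cnt x u + 1.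

Definition sturmian (s : word) : Prop := ~ ult_periodic s /\ balanced s.

Definition rich (s : word) (z : letter) (w : list letter) : Prop :=
  w <> [] /\ is_factor s w /\
  exists v, is_factor s v /\ length v = length w /\ cnt z w > cnt z v.

Fixpoint start (U : nat -> list letter) (i : nat) : nat :=
  match i with 0 => 0 | S j => start U j + length (U j) end.

(* s = U 0 U 1 U 2 ... (infinite concatenation of non-empty finite words) *)
Definition is_concat (s : word) (U : nat -> list letter) : Prop :=
  (forall i, U i <> []) /\
  forall i k, k < length (U i) -> s (start U i + k) = nth k (U i) La.

Definition Rm (x : letter) : list letter :=
  match x with La => [La] | Lb => [Lb; La] end.

Definition R_image (t s : word) : Prop := is_concat s (fun i => Rm (t i)).

From Stdlib Require Import List Arith Lia Classical.
Import ListNotations.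

(* Aperiodicity of t is immediate: R maps ultimately periodic words to
   ultimately periodic words.  For balance we argue by contradiction: an
   unbalanced t contains a minimal unbalanced pair b u b, a v a with
   |u| = |v| and |u|_b = |v|_b.  Their images in s are a window of length L
   with B+2 letters b and a window of length L-1 with B letters b.  The image
   of a letter always ends with a, so the second window can be extended to
   the left by an a, contradicting the balance of s, unless it is a prefix of
   s.  In case (1) this cannot happen since t starts with b.  In case (2) the
   blocks U_k after the first are then shorter than L-1 and all carry the
   minimal number of some letter for their length; we show that such a tiling
   of a balanced aperiodic word is impossible, using that runs of windows of
   minimal count have bounded length. *)

Definition delta (x z : letter) : nat := if letter_eqb x z then 1 else 0.

Definition other (z : letter) : letter := match z with La => Lb | Lb => La end.

Fixpoint occ (z : letter) (w : word) (i n : nat) : nat :=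
  match n with 0 => 0 | S n' => occ z w i n' + delta (w (i + n')) z end.

Lemma delta_le x z : delta x z <= 1.
Proof. unfold delta; destruct (letter_eqb x z); lia. Qed.

Lemma delta_Lb_1 x : delta x Lb = 1 -> x = Lb.
Proof. unfold delta; destruct x; simpl; congruence. Qed.

Lemma delta_Lb_0 x : delta x Lb = 0 -> x = La.
Proof. unfold delta; destruct x; simpl; congruence. Qed.

Lemma delta_inj x y z : delta x z = delta y z -> x = y.
Proof. unfold delta; destruct x, y, z; simpl; congruence. Qed.

Lemma length_fac w i n : length (fac w i n) = n.
Proof. unfold fac. now rewrite length_map, length_seq. Qed.

Lemma occ_cnt z w i n : occ z w i n = cnt z (fac w i n).
Proof.
  induction n as [|n IH]; [reflexivity|].
  unfold fac, cnt in *. rewrite seq_S, map_app, filter_app, length_app.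
  simpl occ. rewrite IH. f_equal. simpl. unfold delta.
  now destruct (letter_eqb (w (i + n)) z).
Qed.

Lemma occ_add z w i a b : occ z w i (a + b) = occ z w i a + occ z w (i + a) b.
Proof.
  induction b as [|b IH]; simpl.
  - rewrite Nat.add_0_r. lia.
  - rewrite Nat.add_succ_r. simpl. rewrite IH, Nat.add_assoc. lia.
Qed.

Lemma occ_last z w i n : occ z w i (S n) = occ z w i n + delta (w (i + n)) z.
Proof. reflexivity. Qed.

Lemma occ_S z w i n : occ z w i (S n) = delta (w i) z + occ z w (S i) n.
Proof.
  change (S n) with (1 + n). rewrite occ_add. simpl.
  now rewrite Nat.add_0_r, Nat.add_1_r.
Qed.

Lemma occ_other z w i n : occ z w i n + occ (other z) w i n = n.
Proof.
  induction n as [|n IH]; simpl; [reflexivity|].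
  unfold delta. destruct z, (w (i + n)); simpl in *; lia.
Qed.

Lemma occ_ext z w w' i j n :
  (forall r, r < n -> w (i + r) = w' (j + r)) -> occ z w i n = occ z w' j n.
Proof.
  induction n as [|n IH]; intro H; simpl; [reflexivity|].
  rewrite IH by (intros; apply H; lia). now rewrite H by lia.
Qed.

Lemma occ_Lb_after_La w p n : w p = La -> occ Lb w p (S n) = occ Lb w (S p) n.
Proof. intro H. now rewrite occ_S, H. Qed.

Lemma nth_fac w i n r d : r < n -> nth r (fac w i n) d = w (i + r).
Proof.
  intro H. unfold fac.
  rewrite (nth_indep _ d (w (i + 0))) by (now rewrite length_map, length_seq).
  now rewrite (map_nth (fun k => w (i + k))), seq_nth.
Qed.

Lemma nth_last (l : list letter) d d' : l <> [] -> nth (length l - 1) l d = last l d'.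
Proof.
  intro H. pose proof (app_removelast_last d' H) as E.
  set (x := last l d') in *. set (rl := removelast l) in *.
  rewrite E, length_app. simpl. rewrite Nat.add_sub. apply nth_middle.
Qed.

Definition count_balanced (s : word) : Prop :=
  forall z i j n, occ z s i n <= occ z s j n + 1.

Lemma balanced_count s : balanced s -> count_balanced s.
Proof.
  intros H z i j n. rewrite !occ_cnt.
  assert (Hf : forall k, is_factor s (fac s k n))
    by (intro k; exists k; now rewrite length_fac).
  apply (H _ _ (Hf i) (Hf j)). now rewrite !length_fac.
Qed.

Lemma count_balanced_balanced s : count_balanced s -> balanced s.
Proof.
  intros H u v [i Hu] [j Hv] Hl x. rewrite Hu, Hv, <- !occ_cnt, <- Hl.
  split; apply H.
Qed.

Lemma count_balanced_Lb s :
  (forall i j n, occ Lb s i n <= occ Lb s j n + 1) -> count_balanced s.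
Proof.
  intros H [|] i j n; [|apply H].
  pose proof (occ_other La s i n). pose proof (occ_other La s j n).
  pose proof (H j i n). simpl other in *. lia.
Qed.

Lemma eventually_constant_count_periodic s z n X m :
  1 <= n -> (forall y, X <= y -> occ z s y n = m) -> ult_periodic s.
Proof.
  intros Hn H. exists n, X. split; [lia|]. intros y Hy.
  pose proof (occ_S z s y n) as E. simpl in E.
  rewrite (H (S y)), (H y) in E by lia.
  symmetry. apply (delta_inj _ _ z). lia.
Qed.

Lemma aperiodic_count_recurs s z n m X :
  ~ ult_periodic s -> 1 <= n -> exists y, X <= y /\ occ z s y n <> m.
Proof.
  intros Hnp Hn. apply NNPP. intro Hc. apply Hnp.
  apply (eventually_constant_count_periodic s z n X m Hn).
  intros y Hy. apply NNPP. intro Hne. apply Hc. now exists y.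
Qed.

Lemma rich_factor_maximal s z p n :
  count_balanced s -> rich s z (fac s p n) -> forall x, occ z s x n <= occ z s p n.
Proof.
  intros Hb [_ [_ [v [[y Hv] [Hl Hgt]]]]] x.
  rewrite length_fac in Hl. rewrite Hl in Hv. subst v.
  rewrite <- !occ_cnt in Hgt. pose proof (Hb z x y n). lia.
Qed.

Lemma aperiodic_factor_rich s p n :
  ~ ult_periodic s -> 1 <= n -> exists z, rich s z (fac s p n).
Proof.
  intros Hnp Hn.
  destruct (aperiodic_count_recurs s Lb n (occ Lb s p n) 0 Hnp Hn) as [x [_ Hx]].
  pose proof (occ_other Lb s x n). pose proof (occ_other Lb s p n).
  simpl other in *.
  assert (Hne : fac s p n <> []).
  { intro E. apply (f_equal (@length letter)) in E. rewrite length_fac in E. simpl in E. lia. }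
  assert (Hf : forall k, is_factor s (fac s k n))
    by (intro k; exists k; now rewrite length_fac).
  destruct (le_lt_dec (occ Lb s x n) (occ Lb s p n)) as [L|L];
    [exists Lb | exists La];
    (split; [exact Hne|]); (split; [apply Hf|]);
    exists (fac s x n); (split; [apply Hf|]); rewrite !length_fac, <- !occ_cnt;
    (split; [reflexivity|lia]).
Qed.

Lemma recurrent_residue (P : nat -> Prop) n :
  0 < n -> (forall X, exists y, X <= y /\ P y) ->
  exists r, forall X, exists y, X <= y /\ y mod n = r /\ P y.
Proof.
  intros Hn HP. apply NNPP. intro Hnone.
  assert (Hbound : forall k, exists X, forall y, X <= y -> y mod n < k -> ~ P y).
  { induction k as [|k [X1 HX1]]; [exists 0; intros; lia|].
    assert (Hk : ~ forall X, exists y, X <= y /\ y mod n = k /\ P y)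
      by (intro Hk; apply Hnone; now exists k).
    apply not_all_ex_not in Hk. destruct Hk as [X2 HX2].
    exists (X1 + X2). intros y Hy Hyk HPy.
    destruct (Nat.eq_dec (y mod n) k) as [E|E].
    - apply HX2. exists y. repeat split; auto; lia.
    - apply (HX1 y); auto; lia. }
  destruct (Hbound n) as [X HX]. destruct (HP X) as [y [Hy HPy]].
  apply (HX y Hy); [apply Nat.mod_upper_bound; lia | exact HPy].
Qed.

Definition minimal_at (z : letter) (s : word) (n x : nat) : Prop :=
  forall y, occ z s x n <= occ z s y n.

Lemma occ_blocks_exact z w x n m l :
  (forall k, k < l -> occ z w (x + k * n) n = m) -> occ z w x (l * n) = l * m.
Proof.
  induction l as [|l IH]; intro H; [reflexivity|].
  rewrite Nat.mul_succ_l, occ_add, IH by (intros; apply H; lia).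
  rewrite (H l) by lia. lia.
Qed.

Lemma occ_blocks_lower z w n m :
  (forall y, m <= occ z w y n) -> forall l y, l * m <= occ z w y (l * n).
Proof.
  intros H l. induction l as [|l IH]; intro y; [simpl; lia|].
  rewrite (Nat.mul_succ_l l n), occ_add. pose proof (IH y). pose proof (H (y + l * n)). lia.
Qed.

Fixpoint sum_below (f : nat -> nat) (T : nat) : nat :=
  match T with 0 => 0 | S T' => sum_below f T' + f T' end.

Lemma sum_below_le_shift f g T :
  (forall M, M < T -> f M <= g M + 1) -> sum_below f T <= sum_below g T + T.
Proof.
  induction T as [|T IH]; intro H; simpl; [lia|].
  pose proof (IH (fun M HM => H M ltac:(lia))). pose proof (H T ltac:(lia)). lia.
Qed.

Lemma sum_below_mono f g T :
  (forall M, M < T -> g M <= f M) -> sum_below g T <= sum_below f T.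
Proof.
  induction T as [|T IH]; intro H; simpl; [lia|].
  pose proof (IH (fun M HM => H M ltac:(lia))). pose proof (H T ltac:(lia)). lia.
Qed.

Lemma sum_below_strict f g T :
  (forall M, M < T -> g M <= f M) -> (exists i, i < T /\ g i < f i) ->
  sum_below g T + 1 <= sum_below f T.
Proof.
  induction T as [|T IH]; intros H [i [Hi Hgi]]; simpl; [lia|].
  destruct (Nat.eq_dec i T) as [->|E].
  - pose proof (sum_below_mono f g T (fun M HM => H M ltac:(lia))). lia.
  - assert (Hi' : i < T) by lia.
    pose proof (IH (fun M HM => H M ltac:(lia)) (ex_intro _ i (conj Hi' Hgi))).
    pose proof (H T ltac:(lia)). lia.
Qed.

Section MinimalRuns.

Variables (s : word) (z : letter).
Hypothesis balanced_s : count_balanced s.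
Hypothesis aperiodic_s : ~ ult_periodic s.

Lemma far_excess_pair n m :
  1 <= n -> (forall y, m <= occ z s y n) ->
  exists y j, m < occ z s y n /\ m < occ z s (y + n + j * n) n.
Proof.
  intros Hn Hm.
  destruct (recurrent_residue (fun y => occ z s y n <> m) n ltac:(lia)
              (fun X => aperiodic_count_recurs s z n m X aperiodic_s Hn)) as [r Hr].
  destruct (Hr 0) as [y1 [_ [Hr1 Hc1]]].
  destruct (Hr (S y1)) as [y2 [Hy2 [Hr2 Hc2]]].
  pose proof (Nat.div_mod_eq y1 n) as D1. pose proof (Nat.div_mod_eq y2 n) as D2.
  rewrite Hr1 in D1. rewrite Hr2 in D2.
  assert (Hq : y1 / n < y2 / n) by nia.
  exists y1, (y2 / n - y1 / n - 1).
  replace (y1 + n + (y2 / n - y1 / n - 1) * n) with y2 by nia.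
  pose proof (Hm y1). pose proof (Hm y2). lia.
Qed.

Lemma minimal_runs_bounded n :
  1 <= n -> exists T, forall x, minimal_at z s n x ->
    exists i, i < T /\ occ z s (x + i) n <> occ z s x n.
Proof.
  intros Hn. apply NNPP. intro Hruns.
  assert (Hlong : forall T, exists x, minimal_at z s n x /\
                    forall i, i < T -> occ z s (x + i) n = occ z s x n).
  { intro T. apply NNPP. intro Hc. apply Hruns. exists T. intros x Hx.
    apply NNPP. intro Hc2. apply Hc. exists x. split; [exact Hx|].
    intros i Hi. apply NNPP. intro Hc3. apply Hc2. now exists i. }
  destruct (Hlong 0) as [x0 [Hmin0 _]]. set (m := occ z s x0 n) in *.
  destruct (far_excess_pair n m Hn Hmin0) as [y [j [Hy1 Hy2]]].
  destruct (Hlong (S j * n + 1)) as [x [Hminx Hrun]].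
  assert (Hxm : occ z s x n = m) by (pose proof (Hminx x0); pose proof (Hmin0 x); lia).
  assert (Hrun_count : occ z s x (S (S j) * n) = S (S j) * m).
  { apply occ_blocks_exact. intros k Hk. rewrite Hrun by nia. exact Hxm. }
  assert (Hexcess_count : S (S j) * m + 2 <= occ z s y (S (S j) * n)).
  { replace (S (S j) * n) with (n + (j * n + n)) by nia. rewrite !occ_add.
    pose proof (occ_blocks_lower z s n m Hmin0 j (y + n)). nia. }
  pose proof (balanced_s z y x (S (S j) * n)). lia.
Qed.

Lemma minimal_runs_uniform N :
  exists T, forall n, 1 <= n -> n < N -> forall x, minimal_at z s n x ->
    exists i, i < T /\ occ z s (x + i) n <> occ z s x n.
Proof.
  induction N as [|N [T1 HT1]]; [exists 0; intros; lia|].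
  destruct (Nat.eq_dec N 0) as [->|HN]; [exists T1; intros; lia|].
  destruct (minimal_runs_bounded N ltac:(lia)) as [T2 HT2]. exists (T1 + T2).
  intros n Hn1 HnN x Hx.
  destruct (Nat.eq_dec n N) as [->|E].
  - destruct (HT2 x Hx) as [i [Hi Hi2]]. exists i. split; [lia|exact Hi2].
  - destruct (HT1 n Hn1 ltac:(lia) x Hx) as [i [Hi Hi2]]. exists i. split; [lia|exact Hi2].
Qed.

(* The potential [Phi q], summing the counts of [z] in the windows of
   lengths [0 .. T-1] starting at [q], grows by at least one at each block but can only
   grow by [T] in total. *)
Lemma no_minimal_tiling (p len : nat -> nat) N :
  (forall k, 1 <= len k /\ len k < N) -> (forall k, p (S k) = p k + len k) ->
  (forall k, minimal_at z s (len k) (p k)) -> False.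
Proof.
  intros Hlen Hp Hmin.
  destruct (minimal_runs_uniform N) as [T HT].
  set (Phi := fun q => sum_below (fun M => occ z s q M) T).
  (* two ways of splitting the window of length [M + len k] at [p k] *)
  assert (Hshift : forall k M, occ z s (p k) M + occ z s (p k + M) (len k)
                               = occ z s (p k) (len k) + occ z s (p (S k)) M).
  { intros k M. rewrite Hp.
    pose proof (occ_add z s (p k) (len k) M). pose proof (occ_add z s (p k) M (len k)).
    rewrite (Nat.add_comm M (len k)) in *. lia. }
  assert (Hinc : forall k, Phi (p k) + 1 <= Phi (p (S k))).
  { intro k. apply sum_below_strict.
    - intros M _. pose proof (Hshift k M). pose proof (Hmin k (p k + M)). lia.
    - destruct (HT (len k) (proj1 (Hlen k)) (proj2 (Hlen k)) (p k) (Hmin k))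
        as [i [Hi Hi2]].
      exists i. split; [exact Hi|].
      pose proof (Hshift k i). pose proof (Hmin k (p k + i)). lia. }
  assert (Hgrow : forall K, Phi (p 0) + K <= Phi (p K)).
  { induction K as [|K IH]; [lia|]. pose proof (Hinc K). lia. }
  assert (Hcap : Phi (p (S T)) <= Phi (p 0) + T).
  { apply sum_below_le_shift. intros M _. apply balanced_s. }
  pose proof (Hgrow (S T)). lia.
Qed.

End MinimalRuns.

Lemma minimal_unbalanced_pair w : forall n i j,
  occ Lb w j n + 2 <= occ Lb w i n ->
  exists i' j' m, w i' = Lb /\ w (i' + S m) = Lb /\ w j' = La /\ w (j' + S m) = La /\
    occ Lb w (S i') m = occ Lb w (S j') m.
Proof.
  induction n as [|n IH]; intros i j H; [simpl in H; lia|].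
  destruct (le_lt_dec (occ Lb w (S j) n + 2) (occ Lb w (S i) n)) as [A|A];
    [exact (IH _ _ A)|].
  destruct (le_lt_dec (occ Lb w j n + 2) (occ Lb w i n)) as [B|B];
    [exact (IH _ _ B)|].
  pose proof (occ_S Lb w i n). pose proof (occ_S Lb w j n).
  pose proof (occ_last Lb w i n). pose proof (occ_last Lb w j n).
  pose proof (delta_le (w i) Lb). pose proof (delta_le (w j) Lb).
  pose proof (delta_le (w (i + n)) Lb). pose proof (delta_le (w (j + n)) Lb).
  destruct n as [|m]; [simpl in *; lia|].
  pose proof (occ_S Lb w i m). pose proof (occ_S Lb w j m).
  exists i, j, m. repeat split.
  - apply delta_Lb_1; lia.
  - apply delta_Lb_1; lia.
  - apply delta_Lb_0; lia.
  - apply delta_Lb_0; lia.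
  - lia.
Qed.

Notation rpos t := (start (fun i => Rm (t i))).

Lemma length_Rm x : length (Rm x) = S (delta x Lb).
Proof. now destruct x. Qed.

Lemma rpos_S (t : word) k : rpos t (S k) = rpos t k + S (delta (t k) Lb).
Proof. simpl. now rewrite length_Rm. Qed.

Lemma rpos_add (t : word) i n : rpos t (i + n) = rpos t i + n + occ Lb t i n.
Proof.
  induction n as [|n IH]; [rewrite Nat.add_0_r; simpl; lia|].
  rewrite Nat.add_succ_r, rpos_S, IH. simpl. lia.
Qed.

Lemma rpos_cover (t : word) x : exists i r, x = rpos t i + r /\ r < length (Rm (t i)).
Proof.
  induction x as [|x [i [r [E H]]]].
  - exists 0, 0. rewrite length_Rm. split; [reflexivity|lia].
  - rewrite length_Rm in H. destruct (Nat.eq_dec r (delta (t i) Lb)) as [Er|Er].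
    + exists (S i), 0. rewrite rpos_S, length_Rm. split; lia.
    + exists i, (S r). rewrite length_Rm. split; lia.
Qed.

Section MorphismR.

Variables s t : word.
Hypothesis image : R_image t s.

Lemma R_image_letter k r :
  r < length (Rm (t k)) -> s (rpos t k + r) = nth r (Rm (t k)) La.
Proof. exact (proj2 image k r). Qed.

(* R maps ultimately periodic words to ultimately periodic words: a period
   [p] of [t] becomes the period [p + |u|_b] of [s], u a period block. *)
Lemma R_image_periodic : ult_periodic t -> ult_periodic s.
Proof.
  intros [p [N [Hp HP]]].
  assert (Hcount : forall d, occ Lb t (N + d) p = occ Lb t N p).
  { induction d as [|d IH]; [now rewrite Nat.add_0_r|].
    rewrite <- IH. pose proof (occ_S Lb t (N + d) p) as E. simpl in E.
    rewrite HP in E by lia. rewrite Nat.add_succ_r. lia. }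
  exists (p + occ Lb t N p), (rpos t N). split; [lia|].
  intros x Hx. destruct (rpos_cover t x) as [i [r [-> H]]].
  assert (Hi : N <= i).
  { destruct (le_lt_dec N i) as [L|L]; [exact L|].
    pose proof (rpos_add t (S i) (N - S i)) as E.
    replace (S i + (N - S i)) with N in E by lia.
    rewrite rpos_S in E. rewrite length_Rm in H. lia. }
  pose proof (rpos_add t i p) as E.
  replace i with (N + (i - N)) in E at 3 by lia. rewrite Hcount in E.
  replace (rpos t i + r + (p + occ Lb t N p)) with (rpos t (i + p) + r) by lia.
  rewrite !R_image_letter; rewrite ?HP; auto.
Qed.

Lemma R_image_letter_count k : occ Lb s (rpos t k) (S (delta (t k) Lb)) = delta (t k) Lb.
Proof.
  pose proof (R_image_letter k) as B. rewrite length_Rm in B.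
  destruct (t k); unfold delta in *; simpl in *.
  - now rewrite (B 0) by lia.
  - now rewrite (B 0), (B 1) by lia.
Qed.

Lemma R_image_count i n : occ Lb s (rpos t i) (n + occ Lb t i n) = occ Lb t i n.
Proof.
  induction n as [|n IH]; [reflexivity|].
  rewrite occ_last.
  replace (S n + (occ Lb t i n + delta (t (i + n)) Lb))
    with ((n + occ Lb t i n) + S (delta (t (i + n)) Lb)) by lia.
  rewrite occ_add, IH, Nat.add_assoc, <- rpos_add, R_image_letter_count. reflexivity.
Qed.

(* Both R(a) and R(b) end with [La]. *)
Lemma R_image_block_end k : s (rpos t (S k) - 1) = La.
Proof.
  rewrite rpos_S. pose proof (R_image_letter k (delta (t k) Lb)) as B.
  rewrite length_Rm in B.
  replace (rpos t k + S (delta (t k) Lb) - 1) with (rpos t k + delta (t k) Lb) by lia.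
  rewrite B by lia. now destruct (t k).
Qed.

Lemma R_image_unbalanced_pair i j m B :
  t i = Lb -> t (i + S m) = Lb -> t j = La -> t (j + S m) = La ->
  occ Lb t (S i) m = B -> occ Lb t (S j) m = B ->
  occ Lb s (rpos t j) (S (S m) + B) = B /\
  occ Lb s (rpos t i) (S (S (S m) + B)) = B + 2.
Proof.
  intros Hi Him Hj Hjm HBi HBj.
  assert (Cj : occ Lb t j (S (S m)) = B)
    by (rewrite occ_last, occ_S, Hj, Hjm; unfold delta; simpl; lia).
  assert (Ci : occ Lb t i (S (S m)) = B + 2)
    by (rewrite occ_last, occ_S, Hi, Him; unfold delta; simpl; lia).
  split.
  - pose proof (R_image_count j (S (S m))) as E. now rewrite Cj in E.
  - pose proof (R_image_count i (S (S m))) as E. rewrite Ci in E.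
    pose proof (rpos_add t i (S (S m))) as Ea. rewrite Ci in Ea.
    pose proof (R_image_block_end (i + S m)) as Hend.
    replace (S (i + S m)) with (i + S (S m)) in Hend by lia. rewrite Ea in Hend.
    replace (S (S m) + (B + 2)) with (S (S (S (S m) + B))) in E by lia.
    rewrite occ_last in E.
    replace (rpos t i + S (S (S m) + B)) with (rpos t i + S (S m) + (B + 2) - 1) in E by lia.
    rewrite Hend in E. change (delta La Lb) with 0 in E. lia.
Qed.

End MorphismR.

Lemma concat_block s U i : is_concat s U -> U i = fac s (start U i) (length (U i)).
Proof.
  intros [_ HU]. apply (nth_ext _ _ La La); [now rewrite length_fac|].
  intros r Hr. now rewrite nth_fac, HU.
Qed.

Lemma concat_prefix_letter s U i r :
  is_concat s U -> is_prefix s (U i) -> r < length (U i) -> s (start U i + r) = s r.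
Proof.
  intros HU Hpre Hr. rewrite (proj2 HU i r Hr), Hpre. now rewrite nth_fac.
Qed.

Lemma concat_block_end s U k :
  is_concat s U -> last (U k) Lb = La -> s (start U (S k) - 1) = La.
Proof.
  intros [Hne HU] Hlast. simpl.
  assert (Hlen : 1 <= length (U k)) by (destruct (U k); [now destruct (Hne k)|simpl; lia]).
  replace (start U k + length (U k) - 1) with (start U k + (length (U k) - 1)) by lia.
  rewrite HU by lia. rewrite (nth_last _ La Lb) by apply Hne. exact Hlast.
Qed.

Section PrefixFactorization.

Variables (s : word) (U : nat -> list letter).
Hypothesis balanced_s : count_balanced s.
Hypothesis aperiodic_s : ~ ult_periodic s.
Hypothesis concat_U : is_concat s U.
Hypothesis prefix_U : forall i, is_prefix s (U i) /\ last (U i) Lb = La.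
Hypothesis rich_U : forall i j z, rich s z (U i) <-> rich s z (U j).

Lemma block_length_pos k : 1 <= length (U k).
Proof. pose proof (proj1 concat_U k). destruct (U k); [congruence|simpl; lia]. Qed.

(* All blocks are rich in a common letter [z], hence carry the least number
   of [other z] among factors of their length. *)
Lemma blocks_minimal : exists z, forall k,
  minimal_at z s (length (U k)) (start U k).
Proof.
  destruct (aperiodic_factor_rich s 0 (length (U 0)) aperiodic_s (block_length_pos 0))
    as [z Hz].
  exists (other z). intros k x.
  assert (Hk : rich s z (fac s (start U k) (length (U k)))).
  { rewrite <- concat_block by exact concat_U. apply (rich_U 0).
    now rewrite (proj1 (prefix_U 0)). }
  pose proof (rich_factor_maximal s z _ _ balanced_s Hk x).
  pose proof (occ_other z s x (length (U k))).
  pose proof (occ_other z s (start U k) (length (U k))). lia.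
Qed.

(* Suppose the prefix of length [N] has [B] letters [Lb] while every factor
   of length [N+1] has at least [B+1].  Then no later block reaches length
   [N]: it would be a copy of that prefix preceded by the final [La] of the
   previous block. *)
Lemma blocks_short N B :
  occ Lb s 0 N = B -> (forall x, B + 1 <= occ Lb s x (S N)) ->
  forall k, length (U (S k)) < N.
Proof.
  intros HB Hmany k. destruct (le_lt_dec N (length (U (S k)))) as [L|L]; [|exact L].
  exfalso. set (p := start U (S k)).
  assert (Hp : 1 <= p) by (pose proof (block_length_pos k); unfold p; simpl; lia).
  assert (Hcopy : occ Lb s p N = B).
  { rewrite <- HB. apply occ_ext. intros r Hr.
    apply (concat_prefix_letter s U); [exact concat_U | apply prefix_U | lia]. }
  pose proof (Hmany (p - 1)) as H.
  rewrite occ_Lb_after_La in H by (apply (concat_block_end s U k concat_U), prefix_U).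
  replace (S (p - 1)) with p in H by lia. lia.
Qed.

(* Hence no such prefix exists: the blocks after the first would tile [s]
   with bounded-length windows of minimal count. *)
Lemma no_deficient_prefix N B :
  occ Lb s 0 N = B -> (forall x, B + 1 <= occ Lb s x (S N)) -> False.
Proof.
  intros HB Hmany. destruct blocks_minimal as [z Hmin].
  apply (no_minimal_tiling s z balanced_s aperiodic_s
           (fun k => start U (S k)) (fun k => length (U (S k))) N).
  - intro k. split; [apply block_length_pos | exact (blocks_short N B HB Hmany k)].
  - reflexivity.
  - intro k. apply Hmin.
Qed.

End PrefixFactorization.

(* A minimal unbalanced pair [b u b], [a v a]
   of [t] maps to a window of length [L] of [s] with [B+2] letters [Lb] and a
   window of length [L-1] with [B].  The latter is preceded by the final [La]
   of the image of the previous letter, contradicting the balance of [s],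
   unless it is a prefix of [s]; this happens only when [t 0 = La], and in
   case (2) it is excluded by [no_deficient_prefix]. *)
Lemma R_image_balanced_Lb s t :
  count_balanced s -> ~ ult_periodic s -> R_image t s ->
  (t 0 = Lb \/
   exists U : nat -> list letter,
     is_concat s U /\
     (forall i, is_prefix s (U i) /\ last (U i) Lb = La) /\
     (forall i j z, rich s z (U i) <-> rich s z (U j))) ->
  forall i j n, occ Lb t i n <= occ Lb t j n + 1.
Proof.
  intros Hb Hnp HR Hcase i j n.
  destruct (le_lt_dec (occ Lb t i n) (occ Lb t j n + 1)) as [Hok|Hunbal]; [exact Hok|].
  exfalso.
  destruct (minimal_unbalanced_pair t n i j ltac:(lia))
    as [i' [j' [m [Hi [Him [Hj [Hjm Heq]]]]]]].
  set (B := occ Lb t (S j') m) in *.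
  destruct (R_image_unbalanced_pair s t HR i' j' m B Hi Him Hj Hjm Heq eq_refl)
    as [Hpoor Hdense].
  assert (Hmany : forall x, B + 1 <= occ Lb s x (S (S (S m) + B)))
    by (intro x; pose proof (Hb Lb (rpos t i') x (S (S (S m) + B))); lia).
  destruct j' as [|j'].
  - destruct Hcase as [H0 | [U [HU [Hpre Hrich_U]]]]; [congruence|].
    exact (no_deficient_prefix s U Hb Hnp HU Hpre Hrich_U _ _ Hpoor Hmany).
  - pose proof (Hmany (rpos t (S j') - 1)) as H.
    rewrite occ_Lb_after_La in H by apply (R_image_block_end s t HR).
    replace (S (rpos t (S j') - 1)) with (rpos t (S j')) in H by (rewrite rpos_S; lia).
    lia.
Qed.

Theorem mainTheorem3 (s t : word) :
  sturmian s ->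
  R_image t s ->
  (t 0 = Lb \/
   exists U : nat -> list letter,
     is_concat s U /\
     (forall i, is_prefix s (U i) /\ last (U i) Lb = La) /\
     (forall i j z, rich s z (U i) <-> rich s z (U j))) ->
  sturmian t.
Proof.
  intros [Hnp Hbal] HR Hcase. pose proof (balanced_count s Hbal) as Hb. split.
  - intro Hper. exact (Hnp (R_image_periodic s t HR Hper)).
  - apply count_balanced_balanced, count_balanced_Lb.
    exact (R_image_balanced_Lb s t Hb Hnp HR Hcase).
Qed.
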